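(* Let $n\ge 1$ and $m\ge 0$ be integers and let $r$ be an integer with $0\le r\le m$. Then $$\mathcal Y_n\big(2^{\{r\}},1^{\{m-r\}}\big)=\frac{1}{(r+1)n}\binom{m}{r}\left(\binom{n-1}{m}+(-1)^r\binom{n-1}{m+r+1}\right).$$ That is, the sum of $\mathfrak Z_n(\sigma)$ over all distinct permutations $\sigma$ of the multiset consisting of $r$ copies of $2$ and $m-r$ copies of $1$ equals the right-hand side.
   Context: Let $\zeta_n=e^{2\pi\sqrt{-1}/n}$. For positive integers $s_1,\dots,s_m$, define $\mathfrak Z_n(s_1,\dots,s_m):=\sum_{1\le i_1<\cdots<i_m\le n-1}\prod_{k=1}^{m}(1-\zeta_n^{i_k})^{-s_k}$ (equal to $1$ if $m=0$ and to $0$ if $m>n-1$). Define $\mathcal Y_n(s_1,\dots,s_m):=\sum_{\sigma}\mathfrak Z_n(\sigma)$, where $\sigma$ runs over all distinct rearrangements of $(s_1,\dots,s_m)$; $\mathcal Y_n$ of the empty sequence is $1$. Notation: $a^{\{k\}}$ denotes the block $a,\dots,a$ of length $k$. Binomial coefficients $\binom{a}{b}$ are $0$ when $b<0$ or $b>a\ge0$. *)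

From HB Require Import structures.
From mathcomp Require Import all_boot all_order all_algebra.
From mathcomp Require Import all_classical all_reals.
From mathcomp Require Import trigo.
From mathcomp.real_closed Require Import complex.
Set Implicit Arguments. Unset Strict Implicit. Unset Printing Implicit Defensive.
Import Order.TTheory GRing.Theory Num.Theory.
Local Open Scope ring_scope.
Local Open Scope complex_scope.

Definition zeta (R : realType) (n : nat) : R[i] :=
  (cos (2 * pi / n%:R)) +i* (sin (2 * pi / n%:R)).

(* Zaux n lo s = sum over lo <= i_1 < ... < i_m <= n-1 of
   prod_k (1 - zeta_n^{i_k})^{-s_k}, where s = [:: s_1; ...; s_m]. *)
Fixpoint Zaux (R : realType) (n lo : nat) (s : seq nat) : R[i] :=
  match s with
  | [::] => 1
  | a :: s' => \sum_(lo <= i < n) (1 - zeta R n ^+ i) ^- a * Zaux R n i.+1 s'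
  end.

Definition frakZ (R : realType) (n : nat) (s : seq nat) : R[i] := Zaux R n 1 s.

(* Y_n(s) : sum of frakZ_n over all distinct rearrangements of s
   ([permutations s] is duplicate-free; undup is harmless). *)
Definition calY (R : realType) (n : nat) (s : seq nat) : R[i] :=
  \sum_(t <- undup (permutations s)) frakZ R n t.

From HB Require Import structures.
From mathcomp Require Import all_boot all_order all_algebra.
From mathcomp Require Import all_classical all_reals.
From mathcomp Require Import trigo.
From mathcomp.real_closed Require Import complex.
From mathcomp Require Import ring zify.
Set Implicit Arguments. Unset Strict Implicit. Unset Printing Implicit Defensive.
Import Order.TTheory GRing.Theory Num.Theory.
Local Open Scope ring_scope.

(* Put x_i = (1 - zeta^i)^-1.  Sorting words in 1 and 2 by their numbers r of
   2s and k of 1s, the sums Y_n(2^{r}, 1^{k}) are the coefficients of t^k u^r in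
   prod_{i=1}^{n-1} (1 + t x_i + u x_i^2).  Writing t = A + B and u = A B, this
   product is prod_i (1 + A x_i) (1 + B x_i), and prod_i (c - zeta^i) =
   1 + c + ... + c^{n-1} gives
     n^2 A B prod_i (1 + A x_i) (1 + B x_i) = ((1 + A)^n - 1) ((1 + B)^n - 1).
   Expanding the right-hand side back in t and u (binomial theorem, and Waring's
   formula for A^j + B^j) and comparing coefficients, which is legitimate since
   every pair (t, u) arises from some (A, B), yields the closed form. *)

Section Cis.
Variable R : realType.
Local Open Scope complex_scope.

Lemma cisD (a b : R) :
  (cos a +i* sin a) * (cos b +i* sin b) = cos (a + b) +i* sin (a + b).
Proof.
rewrite cosD sinD; apply/eqP; rewrite eq_complex /=.
by apply/andP; split; apply/eqP; ring.
Qed.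

Lemma cisMn (a : R) k : (cos a +i* sin a) ^+ k = cos (a *+ k) +i* sin (a *+ k).
Proof.
elim: k => [|k IHk]; first by rewrite expr0 mulr0n cos0 sin0.
by rewrite exprS IHk cisD mulrS.
Qed.

Lemma cos_lt1 (x : R) : 0 < x < pi *+ 2 -> cos x < 1.
Proof.
case/andP=> x_gt0 x_lt2pi.
have cos_lt1_half (y : R) : 0 < y <= pi -> cos y < 1.
  case/andP=> y_gt0 y_lepi.
  by rewrite -cos0 ltr_cos ?in_itv /= ?lexx ?pi_ge0 ?(ltW y_gt0).
have [x_lepi | pi_ltx] := lerP x pi; first by rewrite cos_lt1_half ?x_gt0.
have -> : cos x = cos (pi *+ 2 - x) by rewrite cosB cos2pi sin2pi; ring.
by rewrite cos_lt1_half // subr_gt0 x_lt2pi /= lerBlDr -lerBlDl mulr2n addrK ltW.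
Qed.

End Cis.

Lemma zeta_primitive (R : realType) n : (0 < n)%N -> n.-primitive_root (zeta R n).
Proof.
move=> n_gt0; apply/andP; split=> //; apply/forallP => i; rewrite unity_rootE /zeta cisMn.
have nR_neq0 : (n%:R : R) != 0 by rewrite pnatr_eq0 -lt0n.
have angleE k : (2 * pi / n%:R) *+ k = (pi *+ 2) * (k%:R / n%:R) :> R.
  by rewrite -mulr_natr mulr2n; field.
have [-> | i1_neq_n] := eqVneq i.+1 n.
  by rewrite angleE divff // mulr1 cos2pi sin2pi eqxx.
rewrite eqbF_neg eq_complex /= negb_and; apply/orP; left.
apply/negP => /eqP cos_eq1.
suff : cos ((2 * pi / n%:R) *+ i.+1) < 1 :> R by rewrite cos_eq1 ltxx.
have two_pi_gt0 : (0 : R) < pi *+ 2 by rewrite pmulrn_lgt0 // pi_gt0.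
apply: cos_lt1; rewrite angleE mulr_gt0 ?divr_gt0 ?ltr0n //=.
by rewrite gtr_pMr // ltr_pdivrMr ?ltr0n // mul1r ltr_nat ltn_neqAle i1_neq_n ltn_ord.
Qed.

Section PrimitiveRoot.
Variables (F : fieldType) (n : nat) (z : F).
Hypotheses (n_gt0 : (0 < n)%N) (z_prim : n.-primitive_root z).

Lemma prod_sub_prim_root (c : F) :
  \prod_(1 <= i < n) (c - z ^+ i) = \sum_(j < n) c ^+ j.
Proof.
have Xn_sub1 : ('X - 1%:P) * \prod_(1 <= i < n) ('X - (z ^+ i)%:P) =
    ('X - 1%:P) * \sum_(j < n) 'X ^+ j :> {poly F}.
  by rewrite -subrX1 -(factor_Xn_sub_1 z_prim) [RHS]big_ltn // expr0.
have X_sub1_neq0 : ('X - 1%:P : {poly F}) != 0 by rewrite polyXsubC_eq0.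
have /(congr1 (horner^~ c)) := mulfI X_sub1_neq0 Xn_sub1.
rewrite /= horner_prod horner_sum; under eq_bigr do rewrite hornerXsubC.
by move=> ->; apply: eq_bigr => j _; rewrite hornerXn.
Qed.

Lemma one_sub_prim_root_neq0 i : (0 < i < n)%N -> 1 - z ^+ i != 0.
Proof.
case/andP=> i_gt0 i_ltn; rewrite subr_eq0 eq_sym -(expr0 z) (eq_prim_root_expr z_prim).
by rewrite mod0n modn_small // -lt0n.
Qed.

Lemma prod_one_sub_prim_root : \prod_(1 <= i < n) (1 - z ^+ i) = n%:R.
Proof.
rewrite prod_sub_prim_root (eq_bigr (fun=> 1)) ?sumr_const ?card_ord //.
by move=> j _; rewrite expr1n.
Qed.

Lemma prod_one_add_div_prim_root (A : F) :
  A * n%:R * \prod_(1 <= i < n) (1 + A / (1 - z ^+ i)) = (1 + A) ^+ n - 1.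
Proof.
rewrite -prod_one_sub_prim_root -mulrA -big_split /=.
rewrite big_seq (eq_bigr (fun i => 1 + A - z ^+ i)) -?big_seq.
  by rewrite prod_sub_prim_root subrX1 addrAC subrr add0r.
move=> i; rewrite mem_index_iota => /one_sub_prim_root_neq0 nz.
by rewrite mulrDr mulr1 mulrCA divff // mulr1 addrAC.
Qed.

End PrimitiveRoot.

Section CoefArray.
Variables (F : numFieldType) (K : nat).
Implicit Types (f g : nat -> nat -> F) (t u : F).

Definition eval2 f t u := \sum_(r < K) \sum_(k < K) f r k * t ^+ k * u ^+ r.

Lemma eq_eval2 f g t u : (forall r k, f r k = g r k) -> eval2 f t u = eval2 g t u.
Proof. by move=> fg; apply: eq_bigr => r _; apply: eq_bigr => k _; rewrite fg. Qed.

Lemma eval20 t u : eval2 (fun _ _ => 0) t u = 0.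
Proof. by rewrite /eval2 big1 // => r _; rewrite big1 // => k _; rewrite !mul0r. Qed.

Lemma eval2_sum I (s : seq I) (P : pred I) (G : I -> nat -> nat -> F) t u :
  \sum_(i <- s | P i) eval2 (G i) t u =
    eval2 (fun r k => \sum_(i <- s | P i) G i r k) t u.
Proof.
rewrite /eval2 exchange_big; apply: eq_bigr => r _; rewrite exchange_big.
by apply: eq_bigr => k _; rewrite !mulr_suml.
Qed.

Lemma eval2D f g t u :
  eval2 (fun r k => f r k + g r k) t u = eval2 f t u + eval2 g t u.
Proof.
rewrite /eval2 -big_split; apply: eq_bigr => r _; rewrite -big_split.
by apply: eq_bigr => k _; rewrite !mulrDl.
Qed.

Lemma eval2Z a f t u : eval2 (fun r k => a * f r k) t u = a * eval2 f t u.
Proof.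
rewrite /eval2 mulr_sumr; apply: eq_bigr => r _; rewrite mulr_sumr.
by apply: eq_bigr => k _; rewrite !mulrA.
Qed.

Lemma eval2N f t u : eval2 (fun r k => - f r k) t u = - eval2 f t u.
Proof. by rewrite -mulN1r -eval2Z; apply: eq_eval2 => r k; rewrite mulN1r. Qed.

Lemma eval2_delta a b t u : (a < K)%N -> (b < K)%N ->
  eval2 (fun r k => ((r == a) && (k == b))%:R) t u = t ^+ b * u ^+ a.
Proof.
move=> a_ltK b_ltK.
rewrite /eval2 (bigD1 (Ordinal a_ltK)) //= [X in _ + X]big1 ?addr0; last first.
  move=> r; rewrite -val_eqE /= => /negbTE r_neq_a.
  by rewrite big1 // => k _; rewrite r_neq_a !mul0r.
rewrite (bigD1 (Ordinal b_ltK)) //= [X in _ + X]big1 ?addr0 ?eqxx ?mul1r //.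
by move=> k; rewrite -val_eqE /= => /negbTE ->; rewrite !mul0r.
Qed.

Lemma eval2_row0 (c : nat -> F) t u : (0 < K)%N ->
  eval2 (fun r k => if r is 0 then c k else 0) t u = \sum_(k < K) c k * t ^+ k.
Proof.
rewrite /eval2; case: K => // K' _; rewrite big_ord_recl [X in _ + X]big1 ?addr0.
  by apply: eq_bigr => k _; rewrite mulr1.
by move=> r _; rewrite big1 // => k _; rewrite !mul0r.
Qed.

Lemma eval2_shiftl f t u : (forall r, f r K.-1 = 0) ->
  eval2 (fun r k => if k is k'.+1 then f r k' else 0) t u = t * eval2 f t u.
Proof.
rewrite /eval2; case: K => [|K'] /= fK0; first by rewrite !big_ord0 mulr0.
rewrite mulr_sumr; apply: eq_bigr => r _.
rewrite big_ord_recl big_ord_recr /= fK0 !mul0r add0r addr0 mulr_sumr.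
by apply: eq_bigr => k _; rewrite exprS; ring.
Qed.

Lemma eval2_shiftr f t u : (forall k, f K.-1 k = 0) ->
  eval2 (fun r k => if r is r'.+1 then f r' k else 0) t u = u * eval2 f t u.
Proof.
rewrite /eval2; case: K => [|K'] /= fK0; first by rewrite !big_ord0 mulr0.
rewrite big_ord_recl big1 ?add0r; last by move=> k _; rewrite !mul0r.
rewrite [in RHS]big_ord_recr /= [X in _ + X]big1 ?addr0 ?mulr_sumr; last first.
  by move=> k _; rewrite fK0 !mul0r.
apply: eq_bigr => r _; rewrite mulr_sumr; apply: eq_bigr => k _.
by rewrite exprS; ring.
Qed.

Lemma coef_poly_eq0 (c : nat -> F) : (forall x, \sum_(i < K) c i * x ^+ i = 0) ->
  forall i, (i < K)%N -> c i = 0.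
Proof.
move=> c_vanish i i_ltK; pose p := \poly_(j < K) c j.
suff p_eq0 : p = 0 by have := coef_poly K c i; rewrite -/p p_eq0 coef0 i_ltK.
apply/eqP; apply: contraT => p_neq0.
have := max_poly_roots p_neq0 (rs := [seq j%:R | j <- iota 0 K]).
rewrite size_map size_iota map_inj_uniq ?iota_uniq; last first.
  by move=> a b /eqP; rewrite eqr_nat => /eqP.
have -> : all (root p) [seq j%:R | j <- iota 0 K].
  by apply/allP => x _; rewrite /root horner_poly c_vanish.
by move=> /(_ isT isT) /leq_trans /(_ (size_poly K c)); rewrite ltnn.
Qed.

Lemma eval2_eq0 f : (forall t u, eval2 f t u = 0) ->
  forall r k, (r < K)%N -> (k < K)%N -> f r k = 0.
Proof.
move=> f_vanish r k r_ltK k_ltK; apply: (@coef_poly_eq0 (f r)) k_ltK => t.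
apply: (@coef_poly_eq0 (fun r => \sum_(k < K) f r k * t ^+ k)) r_ltK => u.
rewrite -[RHS](f_vanish t u); apply: eq_bigr => r' _.
by rewrite mulr_suml.
Qed.

End CoefArray.

Definition waring_weight (m r : nat) := ('C(m.+1, r.+1) + 'C(m, r))%N.

Lemma waring_weightSS m r :
  waring_weight m.+1 r.+1 = (waring_weight m r.+1 + waring_weight m r)%N.
Proof. rewrite /waring_weight !binS; lia. Qed.

Section Waring.
Variable F : numFieldType.

(* Coefficient of [t^k u^r] in [(A + B)^j - A^j - B^j], written as a polynomial
   in [t = A + B] and [u = A B]. *)
Definition waring_coef (j r k : nat) : F :=
  if r is r'.+1 then
    if (k + r.*2 == j)%N then (-1) ^+ r' * (waring_weight (k + r') r')%:R else 0
  else if (j == 0) && (k == 0) then -1 else 0.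

Lemma waring_coefSS j r k : waring_coef j.+2 r k =
  (if k is k'.+1 then waring_coef j.+1 r k' else 0)
  - (if r is r'.+1 then waring_coef j r' k else 0) + ((r == 1) && (k == j))%:R.
Proof.
case: r => [|[|r]].
- by case: k => [|k] /=; rewrite ?subr0 ?addr0.
- rewrite /waring_coef /= !mul1r; case: k => [|k].
    case: j => [|j] /=; rewrite ?subr0 ?addr0 //.
    by rewrite /waring_weight !addn0 !binn sub0r opprK natrD mulr1n.
  have [-> | j_neq] := eqVneq j k.+1.
    rewrite !ifT /= ?expr0 ?mul1r ?subr0 ?(eqxx, andbT); try by apply/eqP; lia.
    by rewrite -natrD /waring_weight !addn0 !bin1 !bin0; congr (_%:R); lia.
  by rewrite !ifF ?andbF ?subr0 ?addr0 //; apply/eqP; move/eqP: j_neq; lia.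
- rewrite /waring_coef andFb addr0; case: k => [|k] /=.
    rewrite sub0r !add0n doubleS !eqSS; case: eqP => _; last by rewrite oppr0.
    by rewrite /waring_weight !binn exprS; ring.
  have -> : (k + r.+2.*2 == j.+1)%N = (k.+1 + r.+2.*2 == j.+2)%N by rewrite addSn eqSS.
  have -> : (k.+1 + r.+1.*2 == j)%N = (k.+1 + r.+2.*2 == j.+2)%N.
    by rewrite doubleS !addnS !eqSS.
  case: eqP => _; last by rewrite subr0.
  by rewrite [(k.+1 + r.+1)%N]addSn waring_weightSS !addnS !addSn natrD exprS; ring.
Qed.

Variables (A B : F).

Definition power_sum_defect j := (A + B) ^+ j - A ^+ j - B ^+ j.

Lemma power_sum_defectSS j : power_sum_defect j.+2 =
  (A + B) * power_sum_defect j.+1 - A * B * power_sum_defect j + (A + B) ^+ j * (A * B).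
Proof. rewrite /power_sum_defect !exprS; ring. Qed.

Lemma eval2_waring_coef K j : (j.+1 < K)%N ->
  power_sum_defect j = eval2 K (waring_coef j) (A + B) (A * B).
Proof.
elim/ltn_ind: j => -[|[|j]] IH j_lt.
- rewrite (@eq_eval2 _ _ _ (fun r k => - ((r == 0) && (k == 0))%:R)); last first.
    by move=> [|r] [|k] //=; rewrite ?oppr0.
  rewrite eval2N eval2_delta 1?ltnW // /power_sum_defect !expr0; ring.
- rewrite (@eq_eval2 _ _ _ (fun _ _ => 0)); last first.
    by move=> [|r] k //=; case: ifP => // /eqP; lia.
  rewrite eval20 /power_sum_defect !expr1; ring.
rewrite power_sum_defectSS !IH ?ltnSn //; try lia.
rewrite (eq_eval2 _ _ _ (fun r k => waring_coefSS j r k)) !eval2D eval2N.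
rewrite eval2_shiftl; last by case=> [|r] //=; rewrite ifF //; apply/eqP; lia.
rewrite eval2_shiftr; last first.
  move=> k; have [r Kr] : exists r, K.-1 = r.+1 by exists K.-2; lia.
  by rewrite Kr /= ifF //; apply/eqP; lia.
by rewrite eval2_delta //; lia.
Qed.

End Waring.

Lemma big_ord_widen0 (V : nmodType) (G : nat -> V) a b : (a <= b)%N ->
  (forall i, (a <= i)%N -> G i = 0) -> \sum_(i < a) G i = \sum_(i < b) G i.
Proof.
move=> a_le_b G0; rewrite (big_ord_widen b G a_le_b) big_mkcond.
by apply: eq_bigr => i _; case: ltnP => // /G0 ->.
Qed.

Lemma exp1D_sum_bin (R : comNzRingType) (x : R) N M : (N < M)%N ->
  (1 + x) ^+ N = \sum_(k < M) 'C(N, k)%:R * x ^+ k.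
Proof.
move=> N_lt_M; rewrite addrC exprD1n.
rewrite (eq_bigr (fun k : 'I_N.+1 => 'C(N, k)%:R * x ^+ k)) => [|k _]; last first.
  by rewrite mulr_natl.
apply: (big_ord_widen0 (G := fun k => 'C(N, k)%:R * x ^+ k)) => // k N_lt_k.
by rewrite bin_small ?mul0r.
Qed.

Section ProductCoefs.
Variables (F : numFieldType) (n : nat).

Definition trinomial_coef (r k : nat) : F :=
  if r is 0 then 0 else ('C(n, r) * 'C(n - r, k))%:R.

Definition defect_coef (r k : nat) : F :=
  if r is r'.+1 then (-1) ^+ r' * ('C(n, k + r.*2) * waring_weight (k + r') r')%:R
  else 0.

Lemma eval2_trinomial_coef (t u : F) :
  (1 + t + u) ^+ n - (1 + t) ^+ n = eval2 n.+2 trinomial_coef t u.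
Proof.
have -> : (1 + t + u) ^+ n =
    eval2 n.+2 (fun r k => ('C(n, r) * 'C(n - r, k))%:R) t u.
  rewrite exprDn (big_ord_widen0 (leqnSn n.+1)
      (G := fun r => (1 + t) ^+ (n - r) * u ^+ r *+ 'C(n, r))); last first.
    by move=> i n_lt_i; rewrite bin_small // mulr0n.
  apply: eq_bigr => r _; rewrite (exp1D_sum_bin t (M := n.+2)); last lia.
  rewrite -mulr_natr !mulr_suml; apply: eq_bigr => k _.
  by rewrite natrM; ring.
have -> : (1 + t) ^+ n = eval2 n.+2 (fun r k => if r is 0 then 'C(n, k)%:R else 0) t u.
  by rewrite eval2_row0 // (exp1D_sum_bin t (M := n.+2)).
rewrite -eval2N -eval2D; apply: eq_eval2 => -[|r] k; last by rewrite oppr0 addr0.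
by rewrite bin0 mul1n subn0 subrr.
Qed.

Lemma eval2_defect_coef (A B : F) :
  1 + (1 + (A + B)) ^+ n - (1 + A) ^+ n - (1 + B) ^+ n =
    eval2 n.+2 defect_coef (A + B) (A * B).
Proof.
transitivity (eval2 n.+2 (fun r k => ((r == 0) && (k == 0))%:R) (A + B) (A * B) +
  eval2 n.+2 (fun r k => \sum_(j < n.+1) 'C(n, j)%:R * waring_coef F j r k)
    (A + B) (A * B)).
  rewrite eval2_delta // !expr0 mulr1 -eval2_sum -!addrA; congr (_ + _).
  rewrite addrA !(exp1D_sum_bin _ (ltnSn n)) -!sumrB; apply: eq_bigr => j _.
  rewrite eval2Z -eval2_waring_coef; last by rewrite ltnS ltn_ord.
  by rewrite /power_sum_defect; ring.
rewrite -eval2D; apply: eq_eval2 => -[|r] k.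
  rewrite big_ord_recl big1 ?addr0 => [|j _]; last by rewrite mulr0.
  by case: k => [|k] /=; rewrite ?bin0 ?mul1r ?subrr ?mulr0 ?addr0.
rewrite add0r /defect_coef /waring_coef.
pose c j : F := 'C(n, j)%:R * ((-1) ^+ r * (waring_weight (k + r) r)%:R).
rewrite (eq_bigr (fun j : 'I_n.+1 => if j == k + r.+1.*2 :> nat then c j else 0)).
  rewrite -big_mkcond big_ord1_eq /c natrM; case: ltnP => [_|n_lt]; first by ring.
  by rewrite bin_small // mul0r mulr0.
by move=> j _; rewrite eq_sym; case: eqP; rewrite ?mulr0.
Qed.

Lemma eval2_product_coef (A B : F) :
  eval2 n.+2 (fun r k => trinomial_coef r k + defect_coef r k) (A + B) (A * B) =
    ((1 + A) ^+ n - 1) * ((1 + B) ^+ n - 1).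
Proof.
rewrite eval2D -eval2_trinomial_coef -eval2_defect_coef.
have -> : 1 + (A + B) + A * B = (1 + A) * (1 + B) by ring.
by rewrite exprMn; ring.
Qed.

End ProductCoefs.

Section BinomialIdentities.
Local Open Scope nat_scope.

Lemma mul_bin_sub n a k : 'C(n, a) * 'C(n - a, k) = 'C(n, a + k) * 'C(a + k, a).
Proof.
have [n_lt_ak | ak_le_n] := ltnP n (a + k).
  rewrite [in RHS]bin_small // mul0n.
  have [n_lt_a | a_le_n] := ltnP n a; first by rewrite bin_small.
  by rewrite [X in _ * X]bin_small ?muln0 //; lia.
have facts_gt0 : 0 < a`! * k`! * (n - a - k)`! by rewrite !muln_gt0 !fact_gt0.
apply/eqP; rewrite -(eqn_pmul2r facts_gt0); apply/eqP.
have fact_n := bin_fact (leq_trans (leq_addr k a) ak_le_n).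
have fact_na : 'C(n - a, k) * (k`! * (n - a - k)`!) = (n - a)`!.
  by apply: bin_fact; lia.
have fact_n' := bin_fact ak_le_n.
have fact_ak := bin_fact (leq_addr k a).
rewrite addKn in fact_ak; rewrite subnDA in fact_n'.
transitivity ('C(n, a) * (a`! * (n - a)`!)); first by rewrite -fact_na; ring.
by rewrite fact_n -fact_n' -fact_ak; ring.
Qed.

Lemma trinomial_coef_closed n r k :
  r.+1 * ('C(n, r.+1) * 'C(n - r.+1, k)) = n * ('C(r + k, r) * 'C(n.-1, r + k)).
Proof.
rewrite mul_bin_sub addSn.
transitivity ('C(n, (r + k).+1) * (r.+1 * 'C((r + k).+1, r.+1))); first by ring.
rewrite -mul_bin_diag /=.
transitivity ('C(r + k, r) * ((r + k).+1 * 'C(n, (r + k).+1))); first by ring.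
by rewrite -mul_bin_diag; ring.
Qed.

Lemma defect_coef_closed n r k :
  r.+1 * ('C(n, k + r.+1.*2) * waring_weight (k + r) r) =
    n * ('C(r + k, r) * 'C(n.-1, r + k + r + 1)).
Proof.
have diag_n := mul_bin_diag n (r + k + r + 1).
rewrite (_ : (r + k + r + 1).+1 = k + r.+1.*2) in diag_n; last by lia.
transitivity ('C(n, k + r.+1.*2) *
    (r.+1 * 'C((k + r).+1, r.+1) + r.+1 * 'C(k + r, r))).
  by rewrite /waring_weight; ring.
rewrite -[_ * 'C((k + r).+1, _)]mul_bin_diag /=.
transitivity ('C(k + r, r) * ((k + r.+1.*2) * 'C(n, k + r.+1.*2))).
  by rewrite -mul2n; ring.
by rewrite -diag_n (addnC r k); ring.
Qed.

End BinomialIdentities.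

Lemma product_coef_closed (F : numFieldType) n r k : (0 < n)%N ->
  trinomial_coef F n r.+1 k + defect_coef F n r.+1 k =
    (n%:R : F) ^+ 2 * (((r.+1 * n)%:R)^-1 * 'C(r + k, r)%:R *
      ('C(n.-1, r + k)%:R + (-1) ^+ r * 'C(n.-1, r + k + r + 1)%:R)).
Proof.
move=> n_gt0.
have r1_neq0 : (r.+1%:R : F) != 0 by rewrite pnatr_eq0.
have n_neq0 : (n%:R : F) != 0 by rewrite pnatr_eq0 -lt0n.
apply: (mulfI r1_neq0).
rewrite /trinomial_coef /defect_coef mulrDr -!natrM mulrCA -natrM.
rewrite trinomial_coef_closed defect_coef_closed !natrM; field.
by rewrite n_neq0 addrC natr1.
Qed.

Fixpoint two_one_words (len r : nat) : seq (seq nat) :=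
  if len is len'.+1 then
    (if r is r'.+1 then map (cons 2%N) (two_one_words len' r') else [::])
      ++ map (cons 1%N) (two_one_words len' r)
  else if r == 0%N then [:: [::]] else [::].

Lemma mem_map_cons (T : eqType) (a x : T) s (ss : seq (seq T)) :
  (x :: s \in [seq a :: s' | s' <- ss]) = (x == a) && (s \in ss).
Proof.
apply/mapP/andP => [[s' ss_s' [-> ->]] | [/eqP -> ss_s]]; first by rewrite eqxx.
by exists s.
Qed.

Lemma mem_two_one_words len r t :
  (t \in two_one_words len r) =
    [&& size t == len, all [pred x | (x == 1) || (x == 2)]%N t & count_mem 2%N t == r].
Proof.
have nil_notin a ss : [::] \in [seq a :: s | s <- ss] = false.
  by apply/negbTE/mapP => -[].
elim: len r t => [|len IHlen] r [|x t] /=; try by case: r.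
  by rewrite mem_cat nil_notin orbF; case: r => // r; rewrite nil_notin.
rewrite mem_cat mem_map_cons eqSS IHlen.
have [-> | x_neq1] := eqVneq x 1%N; first by case: r => [|r] //=; rewrite mem_map_cons.
have [-> | x_neq2] := eqVneq x 2%N.
  by case: r => [|r] /=; rewrite ?mem_map_cons ?IHlen add1n ?eqSS ?andbF ?orbF.
by case: r => [|r] /=; rewrite ?mem_map_cons ?(negbTE x_neq2) !andbF.
Qed.

Lemma two_one_words_uniq len r : uniq (two_one_words len r).
Proof.
have cons_inj (a : nat) : injective (cons a) by move=> s s' [].
elim: len r => [|len IHlen] [|r] //=; first by rewrite map_inj_uniq.
rewrite cat_uniq !map_inj_uniq ?IHlen //=.
by rewrite andbT; apply/hasPn => _ /mapP[s _ ->]; rewrite /= mem_map_cons.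
Qed.

Lemma count_mem1_all12 (t : seq nat) : all [pred x | (x == 1) || (x == 2)]%N t ->
  count_mem 1%N t = (size t - count_mem 2%N t)%N.
Proof.
move=> all12; rewrite -(count_predC (pred1 2%N) t) addKn.
by apply: eq_in_count => x /(allP all12) /orP[] /eqP ->.
Qed.

Lemma two_one_words_perm len r t : (r <= len)%N ->
  (t \in two_one_words len r) = perm_eq t (nseq r 2%N ++ nseq (len - r) 1%N).
Proof.
move=> r_le_len; rewrite mem_two_one_words.
set s := nseq r 2%N ++ _.
pose all12 := all [pred x | (x == 1) || (x == 2)]%N.
have size_s : size s = len by rewrite size_cat !size_nseq subnKC.
have all12_s : all12 s by rewrite /all12 all_cat !all_nseq /= !orbT.
have count2_s : count_mem 2%N s = r.
  by rewrite count_cat !count_nseq /= mul1n mul0n addn0.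
apply/idP/idP => [/and3P[/eqP size_t all12_t /eqP count2_t] | t_perm_s]; last first.
  rewrite (perm_size t_perm_s) (perm_all _ t_perm_s) (permP t_perm_s).
  by rewrite size_s count2_s !eqxx andbT.
have all12_ts : all12 (t ++ s) by rewrite /all12 all_cat all12_t.
apply/allP => x /(allP all12_ts) /orP[] /eqP -> /=; apply/eqP.
  by rewrite !count_mem1_all12 // size_t size_s count2_t count2_s.
by rewrite count2_t.
Qed.

Lemma two_one_words_small len r : (len < r)%N -> two_one_words len r = [::].
Proof. by elim: len r => [|len IHlen] [|r] //= r_gt; rewrite !IHlen //; lia. Qed.

Lemma size_two_one_words len r t : t \in two_one_words len r -> size t = len.
Proof. by rewrite mem_two_one_words => /and3P[/eqP]. Qed.

Section GeneratingFunction.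
Variables (R : realType) (n : nat).
Local Notation x i := ((1 - zeta R n ^+ i)^-1).

Definition Yfrom lo len r : R[i] := \sum_(t <- two_one_words len r) Zaux R n lo t.

Lemma Zaux_eq0 lo t : (n - lo < size t)%N -> Zaux R n lo t = 0.
Proof.
elim: t lo => [|a t IHt] lo //= t_long; rewrite big_nat big1 // => i /andP[lo_le_i i_ltn].
by rewrite IHt ?mulr0 //; lia.
Qed.

Lemma Yfrom_eq0 lo len r : (n - lo < len)%N -> Yfrom lo len r = 0.
Proof.
move=> len_gt; rewrite /Yfrom big_seq big1 // => t /size_two_one_words size_t.
by rewrite Zaux_eq0 // size_t.
Qed.

Lemma Yfrom_small lo len r : (len < r)%N -> Yfrom lo len r = 0.
Proof. by move=> len_lt; rewrite /Yfrom two_one_words_small // big_nil. Qed.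

Lemma Yfrom0 lo r : Yfrom lo 0 r = (r == 0)%:R.
Proof. by case: r => [|r]; rewrite /Yfrom /= ?big_nil // big_seq1. Qed.

Lemma YfromS lo len r : Yfrom lo len.+1 r =
  (if r is r'.+1 then \sum_(lo <= i < n) x i ^+ 2 * Yfrom i.+1 len r' else 0)
  + \sum_(lo <= i < n) x i * Yfrom i.+1 len r.
Proof.
rewrite /Yfrom /= big_cat /=; congr (_ + _).
  case: r => [|r]; first by rewrite big_nil.
  rewrite big_map exchange_big; apply: eq_bigr => i _.
  by rewrite mulr_sumr; apply: eq_bigr => t _; rewrite exprVn.
rewrite big_map exchange_big; apply: eq_bigr => i _.
by rewrite mulr_sumr; apply: eq_bigr => t _; rewrite expr1.
Qed.

Lemma Yfrom_step lo len r : (lo < n)%N -> Yfrom lo len.+1 r =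
  Yfrom lo.+1 len.+1 r + (if r is r'.+1 then x lo ^+ 2 * Yfrom lo.+1 len r' else 0)
  + x lo * Yfrom lo.+1 len r.
Proof.
move=> lo_ltn; rewrite YfromS [Yfrom lo.+1 len.+1 r]YfromS !(big_ltn lo_ltn).
by case: r => [|r] /=; rewrite ?(big_ltn lo_ltn); ring.
Qed.

Definition Ycoef lo r k := Yfrom lo (r + k) r.

Lemma Ycoef_step lo r k : (lo < n)%N -> Ycoef lo r k =
  Ycoef lo.+1 r k + x lo ^+ 2 * (if r is r'.+1 then Ycoef lo.+1 r' k else 0)
  + x lo * (if k is k'.+1 then Ycoef lo.+1 r k' else 0).
Proof.
move=> lo_ltn; rewrite /Ycoef; case: r => [|r]; case: k => [|k].
- by rewrite /= !Yfrom0 !mulr0 !addr0.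
- by rewrite add0n Yfrom_step // mulr0 !addr0.
- by rewrite addn0 Yfrom_step // addn0 (Yfrom_small _ (ltnSn r)) !mulr0 addr0.
- by rewrite addnS Yfrom_step // addSnnS.
Qed.

Lemma Ycoef_n r k : Ycoef n r k = ((r == 0) && (k == 0))%:R.
Proof.
rewrite /Ycoef; case: r => [|r]; case: k => [|k]; rewrite ?Yfrom0 //.
all: by rewrite ?add0n ?addn0 ?addSn YfromS !big_geq // add0r.
Qed.

Lemma eval2_Ycoef lo t u : (lo <= n)%N ->
  eval2 n.+2 (Ycoef lo) t u = \prod_(lo <= i < n) (1 + t * x i + u * x i ^+ 2).
Proof.
move=> lo_le_n.
have [d ->] : exists d, lo = (n - d)%N by exists (n - lo)%N; rewrite subKn.
elim: d => [|d IHd].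
  rewrite subn0 big_geq // (eq_eval2 _ _ _ Ycoef_n) eval2_delta //.
  by rewrite !expr0 mulr1.
have [n_le_d | d_ltn] := leqP n d.
  by rewrite (_ : n - d.+1 = n - d)%N ?IHd //; lia.
have lo_ltn : (n - d.+1 < n)%N by lia.
have loS : (n - d.+1).+1 = (n - d)%N by lia.
rewrite big_ltn // loS -IHd (eq_eval2 _ _ _ (fun r k => Ycoef_step r k lo_ltn)).
rewrite !eval2D !eval2Z loS eval2_shiftr => [|k]; last first.
  by rewrite /Ycoef Yfrom_eq0 //; lia.
by rewrite eval2_shiftl => [|r]; [ring | rewrite /Ycoef Yfrom_eq0 //; lia].
Qed.

End GeneratingFunction.

Lemma exists_sum_prod (C : numClosedFieldType) (t u : C) :
  exists A B, t = A + B /\ u = A * B.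
Proof.
pose s := sqrtC (t ^+ 2 - 4%:R * u).
exists ((t + s) / 2%:R), ((t - s) / 2%:R).
split; first by field.
have -> : (t + s) / 2%:R * ((t - s) / 2%:R) = (t ^+ 2 - s ^+ 2) / 4%:R by field.
by rewrite sqrtCK; field.
Qed.

Section Coefficients.
Variables (R : realType) (n : nat).
Hypothesis n_gt0 : (0 < n)%N.
Local Notation x i := ((1 - zeta R n ^+ i)^-1).

Lemma prod_quadratic_zeta (A B : R[i]) :
  A * B * n%:R ^+ 2 * \prod_(1 <= i < n) (1 + (A + B) * x i + A * B * x i ^+ 2) =
    ((1 + A) ^+ n - 1) * ((1 + B) ^+ n - 1).
Proof.
have prim := zeta_primitive R n_gt0.
rewrite -!(prod_one_add_div_prim_root n_gt0 prim).
rewrite (eq_bigr (fun i => (1 + A / (1 - zeta R n ^+ i)) *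
                           (1 + B / (1 - zeta R n ^+ i)))).
  by rewrite big_split /=; ring.
by move=> i _; ring.
Qed.

Lemma Ycoef_closed r k : (r.+1 < n.+2)%N -> (k < n.+2)%N ->
  n%:R ^+ 2 * Ycoef R n 1 r k = trinomial_coef _ n r.+1 k + defect_coef _ n r.+1 k.
Proof.
move=> r_lt k_lt; apply/eqP; rewrite -subr_eq0; apply/eqP.
pose f r k := (if r is r'.+1 then n%:R ^+ 2 * Ycoef R n 1 r' k else 0)
  + - (trinomial_coef _ n r k + defect_coef _ n r k).
apply: (@eval2_eq0 _ _ f _ r.+1 k r_lt k_lt) => t u.
have [A [B [-> ->]]] := exists_sum_prod t u.
rewrite eval2D eval2N eval2_product_coef eval2_shiftr => [|k']; last first.
  by rewrite /Ycoef Yfrom_eq0 ?mulr0 //; lia.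
by rewrite eval2Z eval2_Ycoef // mulrA prod_quadratic_zeta subrr.
Qed.

End Coefficients.

Theorem theorem6 (R : realType) (n m r : nat) :
  (1 <= n)%N -> (r <= m)%N ->
  calY R n (nseq r 2%N ++ nseq (m - r) 1%N) =
    (((r.+1 * n)%:R)^-1 * ('C(m, r))%:R *
     (('C(n.-1, m))%:R + (-1) ^+ r * ('C(n.-1, m + r + 1))%:R) : R[i]).
Proof.
move=> n_gt0 r_le_m.
have -> : calY R n (nseq r 2%N ++ nseq (m - r) 1%N) = Yfrom R n 1 m r.
  rewrite /calY /Yfrom /frakZ; apply/perm_big/uniq_perm.
  - exact: undup_uniq.
  - exact: two_one_words_uniq.
  - by move=> t; rewrite mem_undup mem_permutations two_one_words_perm.
have [n_le_m | m_ltn] := leqP n m.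
  by rewrite Yfrom_eq0 ?(@bin_small n.-1 m) ?(@bin_small n.-1 (m + r + 1))
    ?mulr0 ?addr0 ?mulr0 //; lia.
have n2_neq0 : (n%:R : R[i]) ^+ 2 != 0 by rewrite expf_eq0 pnatr_eq0 -lt0n n_gt0.
apply: (mulfI n2_neq0).
rewrite -{1}(subnKC r_le_m) -[Yfrom _ _ _ _ _]/(Ycoef R n 1 r (m - r)).
by rewrite Ycoef_closed ?product_coef_closed ?(subnKC r_le_m) //; lia.
Qed.
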